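(* Let $\lambda_1\ge0$ and $\lambda_2=0$. Let $P_n$ be the monic orthogonal polynomials for $\langle f,g\rangle_F=\int_{\mathbb R}fg\,e^{-x^4}dx$, $k_n=\langle P_n,P_n\rangle_F$, and let $Q_n$ be the monic orthogonal polynomials for $\langle f,g\rangle_S=\int_{\mathbb R}fg\,e^{-x^4}dx+\lambda_1 f(0)g(0)$, $\widehat k_n=\langle Q_n,Q_n\rangle_S$. Then $Q_0(x)=1$, $Q_1(x)=x$, and for all $n\ge1$, $$xP_n(x)=Q_{n+1}(x)+a_nQ_{n-1}(x),\qquad xQ_n(x)=P_{n+1}(x)+b_nP_{n-1}(x),$$ where $a_n=\dfrac{k_n}{\widehat k_{n-1}}$ and $b_n=\dfrac{\widehat k_n}{k_{n-1}}$.
   Context: All polynomials are real; ''monic orthogonal polynomials'' means $\deg P_n=\deg Q_n=n$ with leading coefficient $1$ and orthogonality to all polynomials of lower degree in the respective inner product. *)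

From HB Require Import structures.
From mathcomp Require Import all_boot all_order all_algebra.
From mathcomp Require Import all_classical all_reals all_analysis.
Set Implicit Arguments. Unset Strict Implicit. Unset Printing Implicit Defensive.
Import Order.TTheory GRing.Theory Num.Theory.
Local Open Scope ring_scope.

Definition ipF (R : realType) (f g : {poly R}) : R :=
  Rintegral (@lebesgue_measure R) setT
    (fun x : R => f.[x] * g.[x] * expR (- x ^+ 4)).

Definition ipS (R : realType) (l1 l2 : R) (f g : {poly R}) : R :=
  ipF f g + l1 * f.[0] * g.[0] + l2 * (f^`()).[0] * (g^`()).[0].

Definition monic_OPS (R : realType) (ip : {poly R} -> {poly R} -> R)
    (P : nat -> {poly R}) : Prop :=
  forall n : nat,
    size (P n) = n.+1 /\ P n \is monic /\
    (forall q : {poly R}, (size q <= n)%N -> ip (P n) q = 0).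

From HB Require Import structures.
From mathcomp Require Import all_boot all_order all_algebra.
From mathcomp Require Import all_classical all_reals all_analysis.
From mathcomp Require Import ring lra zify polyrcf measurable_realfun.
Set Implicit Arguments. Unset Strict Implicit. Unset Printing Implicit Defensive.
Import Order.TTheory GRing.Theory Num.Theory.
Local Open Scope classical_set_scope.
Local Open Scope ring_scope.

(* Both inner products are positive definite on polynomials and invariant under
   [x |-> -x], so each [Q_n] and [P_n] has the parity of [n].  Since [l2 = 0] and the
   point mass sits at [0], multiplication by [x] is adjoint between the two products:
   [<x f, g>_S = <f, x g>_F].  Thus [x P_n - Q_{n+1}] has degree [< n+1], and its
   [S]-product with [Q_j] is [<P_n, x Q_j>_F - <Q_{n+1}, Q_j>_S]: zero for [j < n-1]
   by orthogonality, zero for [j = n] by parity, and [k_n] for [j = n-1] because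
   [x Q_{n-1} - P_n] has degree [< n].  The second relation is symmetric. *)

Section FreudIntegral.
Variable R : realType.
Local Notation mu := (@lebesgue_measure R).
Implicit Types (p : {poly R}) (x : R).

Definition freud_weight x := expR (- x ^+ 4).

Lemma freud_weight_ge0 x : 0 <= freud_weight x.
Proof. exact: expR_ge0. Qed.

Lemma freud_weightN x : freud_weight (- x) = freud_weight x.
Proof. by rewrite /freud_weight (_ : 4%N = (2 * 2)%N) // !exprM sqrrN. Qed.

Lemma measurable_freud_weight : measurable_fun setT freud_weight.
Proof. by apply: measurableT_comp => //; exact: measurableT_comp. Qed.

Lemma freud_weight_le x : freud_weight x <= expR 1 * expR (- (2 * x ^+ 2)).
Proof.
rewrite -expRD ler_expR (_ : 4%N = (2 * 2)%N) // exprM.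
have := sqr_ge0 (x ^+ 2 - 1); set y := x ^+ 2; nra.
Qed.

Lemma normrX_le_expR_sqr n x :
  `|x| ^+ n <= (1 + (n.+1)`!%:R) * expR (x ^+ 2).
Proof.
set y := x ^+ 2; have y0 : 0 <= y by exact: sqr_ge0.
have fact_gt0 : 0 < (n.+1)`!%:R :> R by rewrite ltr0n fact_gt0.
have ey1 : 1 <= expR y by rewrite -expR0 ler_expR.
have yn_le : y ^+ n.+1 <= (n.+1)`!%:R * expR y.
  rewrite -ler_pdivrMl // mulrC.
  have := expR_ge1Dxn n y0; lra.
have xn_le : `|x| ^+ n <= 1 + y ^+ n.+1.
  have [le1|gt1] := leP `|x| 1.
    have := exprn_ile1 n (normr_ge0 x) le1.
    have : 0 <= y ^+ n.+1 by rewrite exprn_ge0.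
    lra.
  have : `|x| ^+ n <= `|x| ^+ (2 * n.+1) by rewrite ler_eXn2l //; lia.
  rewrite exprM (real_normK (num_real x)) -/y; lra.
nra.
Qed.

Lemma monomial_freud_le_gauss n x :
  `|x ^+ n * freud_weight x| <= (1 + (n.+1)`!%:R) * expR 1 * gauss_fun x.
Proof.
rewrite normrM normrX (ger0_norm (freud_weight_ge0 _)).
apply: le_trans (ler_pM (exprn_ge0 _ (normr_ge0 x)) (freud_weight_ge0 _)
  (normrX_le_expR_sqr n x) (freud_weight_le x)) _.
rewrite /gauss_fun mulrACA -expRD (_ : x ^+ 2 - 2 * x ^+ 2 = - x ^+ 2) //; ring.
Qed.

Lemma measurable_poly_freud p : measurable_fun setT (fun x => p.[x] * freud_weight x).
Proof.
apply: measurable_funM; last exact: measurable_freud_weight.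
by apply: continuous_measurable_fun; exact: continuous_horner.
Qed.

Lemma integrable_monomial_freud n :
  mu.-integrable setT (EFin \o (fun x => x ^+ n * freud_weight x)).
Proof.
apply: le_integrable
  (integrableZl measurableT ((1 + (n.+1)`!%:R) * expR 1) integrableT_gauss) => //.
- apply/measurable_EFinP; apply: measurable_funM; last exact: measurable_freud_weight.
  exact: exprn_measurable.
- move=> x _ /=; rewrite lee_fin [leRHS]ger0_norm; first exact: monomial_freud_le_gauss.
  by rewrite !mulr_ge0 ?expR_ge0 ?gauss_fun_ge0 ?addr_ge0.
Qed.

Lemma integrable_poly_freud p :
  mu.-integrable setT (EFin \o (fun x => p.[x] * freud_weight x)).
Proof.
have : mu.-integrable setT (fun x => \sum_(i < size p)
    ((p`_i)%:E * (EFin \o (fun y : R => (y ^+ i * freud_weight y)%R)) x))%E.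
  apply: integrable_sum => // i _; apply: integrableZl => //.
  exact: integrable_monomial_freud.
apply: eq_integrable => // x _ /=; rewrite sumEFin horner_coef mulr_suml.
by congr EFin; apply: eq_bigr => i _; rewrite mulrA.
Qed.

Definition freud_int p := Rintegral mu setT (fun x => p.[x] * freud_weight x).

Lemma freud_intD p q : freud_int (p + q) = freud_int p + freud_int q.
Proof.
rewrite /freud_int -RintegralD //; try exact: integrable_poly_freud.
by apply: eq_Rintegral => x _; rewrite hornerD mulrDl.
Qed.

Lemma freud_intZ c p : freud_int (c *: p) = c * freud_int p.
Proof.
rewrite /freud_int -RintegralZl //; last exact: integrable_poly_freud.
by apply: eq_Rintegral => x _; rewrite hornerZ mulrA.
Qed.

Lemma freud_int_sqr_ge0 p : 0 <= freud_int (p * p).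
Proof.
apply: Rintegral_ge0 => x _.
by rewrite hornerM -expr2 mulr_ge0 ?sqr_ge0 ?freud_weight_ge0.
Qed.

Lemma freud_int_compNX p : freud_int (p \Po (- 'X)) = freud_int p.
Proof.
rewrite /freud_int /Rintegral; congr fine.
pose opp : measurableTypeR R -> measurableTypeR R := -%R.
have mopp : measurable_fun setT opp by exact: measurable_funN.
set f := fun x => (p.[x] * freud_weight x)%:E.
have fN x : ((p \Po - 'X).[x] * freud_weight x)%:E = (f \o opp) x.
  by rewrite /f /= horner_comp hornerN hornerX freud_weightN.
transitivity (\int[mu]_(x in opp @^-1` setT) (f \o opp) x)%E.
  by rewrite preimage_setT; apply: eq_integral => x _; rewrite fN.
rewrite -integral_pushforward //.
- by apply: eq_measure_integral => A mA _; exact: lebesgue_measureN.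
- by apply/measurable_EFinP; exact: measurable_poly_freud.
- rewrite preimage_setT; apply: eq_integrable (integrable_poly_freud (p \Po (- 'X))) => //.
  by move=> x _; rewrite /= fN.
Qed.

Lemma negligible_root p : p != 0 -> mu.-negligible [set x | root p x].
Proof.
move=> p0; exists [set` rootsR p]; split.
- exact/countable_measurable/finite_set_countable/finite_seq.
- exact/countable_lebesgue_measure0/finite_set_countable/finite_seq.
- by move=> x /= rx; rewrite -roots_on_rootsR.
Qed.

Lemma lebesgue_not_negligibleT : ~ mu.-negligible [set: R].
Proof.
move=> [A [mA A0 TA]].
have : (mu `[0%R, 1%R] <= mu A)%E by apply: le_measure; rewrite ?inE // => x _; exact: TA.
by rewrite A0 lebesgue_measure_itv /= lte_fin ltr01 /= oppr0 adde0 lee_fin ler10.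
Qed.

(* [p^2 w] vanishes almost everywhere, yet only at the finitely many roots of [p]. *)
Lemma freud_int_sqr_eq0 p : freud_int (p * p) = 0 -> p = 0.
Proof.
move=> int0; apply/eqP/negPn/negP => p0; apply: lebesgue_not_negligibleT.
set g := fun x => (p * p).[x] * freud_weight x.
have g_ge0 x : 0 <= g x by rewrite /g hornerM -expr2 mulr_ge0 ?sqr_ge0 ?freud_weight_ge0.
have abs_int0 : (\int[mu]_(x in setT) `|(g x)%:E|)%E = 0.
  under eq_integral do rewrite abse_EFin ger0_norm //.
  rewrite -(fineK (integrable_fin_num _ (integrable_poly_freud (p * p)))) //.
  by move: int0; rewrite /freud_int /Rintegral -/g => ->.
have [N [mN N0 gN]] : ae_eq mu setT (fun x => (g x)%:E) (cst 0).
  apply/(ae_eq_integral_abs _ measurableT) => //.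
  by apply/measurable_EFinP; exact: measurable_poly_freud.
have negN : mu.-negligible N by exists N; split.
apply: negligibleS (negligibleU negN (negligible_root p0)) => x _.
have [px0|px0] := eqVneq p.[x] 0; [right; exact/eqP | left; apply: gN => /=].
move=> /(_ I) [] /eqP; apply/negP.
by rewrite /g hornerM !mulf_neq0 // gt_eqF ?expR_gt0.
Qed.

End FreudIntegral.

Section Polynomials.
Variable R : idomainType.
Implicit Types p q : {poly R}.

Lemma size_polyNX : size (- 'X : {poly R}) = 2.
Proof. by rewrite size_polyN size_polyX. Qed.

Lemma comp_polyNXK p : (p \Po (- 'X)) \Po (- 'X) = p.
Proof.
by rewrite -comp_polyA -scaleN1r comp_polyZ comp_polyX scalerA mulrNN mulr1 scale1r comp_polyXr.
Qed.

Lemma size_comp_polyNX p : size (p \Po (- 'X)) = size p.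
Proof. exact/size_comp_poly2/size_polyNX. Qed.

Lemma lead_coef_comp_polyNX p :
  lead_coef (p \Po (- 'X)) = (-1) ^+ (size p).-1 * lead_coef p.
Proof. by rewrite lead_coef_comp ?size_polyNX // lead_coefN lead_coefX mulrC. Qed.

Lemma size_sub_coef_monic p q n : (size p <= n.+1)%N -> size q = n.+1 ->
  q \is monic -> (size (p - p`_n *: q)%R <= n)%N.
Proof.
move=> sp sq /monicP; rewrite lead_coefE sq => q1.
apply/leq_sizeP => j; rewrite coefB coefZ leq_eqVlt => /orP[/eqP <-|nj].
  by rewrite q1 mulr1 subrr.
by rewrite [p`_j]nth_default ?[q`_j]nth_default ?sq ?mulr0 ?subr0 //; exact: leq_trans sp nj.
Qed.

Lemma size_monicB p q n : size p = n.+1 -> size q = n.+1 ->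
  p \is monic -> q \is monic -> (size (p - q)%R <= n)%N.
Proof.
move=> sp sq /monicP p1 mq; have pn1 : p`_n = 1 by rewrite -p1 lead_coefE sp.
by have := size_sub_coef_monic (eq_leq sp) sq mq; rewrite pn1 scale1r.
Qed.

End Polynomials.

Section EvenInnerProduct.
Variable R : realType.
Implicit Types (f g h q r : {poly R}) (c : R).

Record even_inner_product (ip : {poly R} -> {poly R} -> R) : Prop := {
  ipC : forall f g, ip f g = ip g f;
  ipDl : forall f g h, ip (f + g) h = ip f h + ip g h;
  ipZl : forall c f h, ip (c *: f) h = c * ip f h;
  ip_anisotropic : forall f, ip f f = 0 -> f = 0;
  ip_compNX : forall f g, ip (f \Po (- 'X)) (g \Po (- 'X)) = ip f g }.

Variable ip : {poly R} -> {poly R} -> R.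
Hypothesis ipE : even_inner_product ip.

Lemma ipZr c f h : ip f (c *: h) = c * ip f h.
Proof. by rewrite ipC // ipZl // ipC. Qed.

Lemma ipNl f h : ip (- f) h = - ip f h.
Proof. by rewrite -scaleN1r ipZl // mulN1r. Qed.

Lemma ipNr f h : ip f (- h) = - ip f h.
Proof. by rewrite -scaleN1r ipZr // mulN1r. Qed.

Lemma ipBl f g h : ip (f - g) h = ip f h - ip g h.
Proof. by rewrite ipDl // ipNl. Qed.

Lemma ip_parity_eq0 m f g : f \Po (- 'X) = (-1) ^+ m *: f ->
  g \Po (- 'X) = - ((-1) ^+ m *: g) -> ip f g = 0.
Proof.
move=> fN gN; have := ip_compNX ipE f g.
rewrite fN gN ipZl // ipNr ipZr // mulrN mulrA -expr2 sqrr_sign mul1r.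
by move/eqP; rewrite eq_sym -addr_eq0 -mulr2n mulrn_eq0 => /eqP.
Qed.

Variable Q : nat -> {poly R}.
Hypothesis HQ : monic_OPS ip Q.

Lemma size_OPS n : size (Q n) = n.+1.
Proof. by have [] := HQ n. Qed.

Lemma monic_OPS_monic n : Q n \is monic.
Proof. by have [_ []] := HQ n. Qed.

Lemma size_mulX_OPS n : size ('X * Q n) = n.+2.
Proof. by rewrite mulrC size_mulX ?size_OPS // -size_poly_eq0 size_OPS. Qed.

Lemma monic_mulX_OPS n : 'X * Q n \is monic.
Proof. by rewrite monicMl ?monicX ?monic_OPS_monic. Qed.

Lemma OPS_orthl n q : (size q <= n)%N -> ip (Q n) q = 0.
Proof. by have [_ [_]] := HQ n; apply. Qed.

Lemma OPS_orthr n q : (size q <= n)%N -> ip q (Q n) = 0.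
Proof. by move=> sq; rewrite ipC // OPS_orthl. Qed.

Lemma OPS_norm_neq0 n : ip (Q n) (Q n) != 0.
Proof.
apply/eqP => /(ip_anisotropic ipE) Q0.
by have := size_OPS n; rewrite Q0 size_poly0.
Qed.

Lemma OPS_ortho_eq0 n r : (size r <= n)%N ->
  (forall j, (j < n)%N -> ip r (Q j) = 0) -> r = 0.
Proof.
elim: n r => [|n IHn] r sr r_orth; first exact/size_poly_leq0P.
have r' : r - r`_n *: Q n = 0.
  apply: IHn => [|j jn]; first exact: size_sub_coef_monic (size_OPS n) (monic_OPS_monic n).
  by rewrite ipBl ipZl // r_orth 1?ltnW // OPS_orthl ?size_OPS // mulr0 subr0.
have rE : r = r`_n *: Q n by apply/eqP; rewrite -subr_eq0 r'.
have rn0 : r`_n = 0.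
  have := r_orth n (ltnSn n); rewrite {1}rE ipZl // => /eqP.
  by rewrite mulf_eq0 (negbTE (OPS_norm_neq0 n)) orbF => /eqP.
by rewrite rE rn0 scale0r.
Qed.

(* [(-1)^n Q_n(-x)] is again monic of degree [n] and orthogonal to lower degrees. *)
Lemma OPS_compNX n : Q n \Po (- 'X) = (-1) ^+ n *: Q n.
Proof.
set T := (-1) ^+ n *: (Q n \Po (- 'X)).
have sgn_sqr : (-1) ^+ n * (-1) ^+ n = 1 :> R by rewrite -expr2 sqrr_sign.
suff TQ : T = Q n by rewrite -[in RHS]TQ /T scalerA sgn_sqr scale1r.
apply/eqP; rewrite -subr_eq0; apply/eqP/(OPS_ortho_eq0 (n := n)) => [|j jn].
  apply: (size_monicB _ (size_OPS n) _ (monic_OPS_monic n)).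
    by rewrite size_scale ?signr_eq0 // size_comp_polyNX size_OPS.
  apply/monicP; rewrite lead_coefZ lead_coef_comp_polyNX size_OPS.
  by rewrite (monicP (monic_OPS_monic n)) mulr1.
rewrite ipBl ipZl // -(ip_compNX ipE) comp_polyNXK.
by rewrite !OPS_orthl ?size_comp_polyNX ?size_OPS // mulr0 subrr.
Qed.

Lemma OPS0 : Q 0 = 1.
Proof.
have := monic_OPS_monic 0; rewrite (size1_polyC (eq_leq (size_OPS 0))).
by rewrite monicE lead_coefC => /eqP ->.
Qed.

Lemma OPS1 : Q 1 = 'X.
Proof.
set c := (Q 1)`_0.
have lead1 : (Q 1)`_1 = 1 by rewrite -(monicP (monic_OPS_monic 1)) lead_coefE size_OPS.
have QE : Q 1 = 'X + c%:P.
  have := size_sub_coef_monic (eq_leq (size_OPS 1)) (size_polyX R) (@monicX R).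
  rewrite lead1 scale1r => /size1_polyC; rewrite coefB coefX subr0 => <-.
  by rewrite addrC subrK.
have := OPS_compNX 1; rewrite QE comp_polyD comp_polyX comp_polyC expr1 scaleN1r opprD.
move/addrI; rewrite -polyCN => /polyC_inj/eqP.
rewrite -addr_eq0 -mulr2n mulrn_eq0 /= => /eqP c0.
by rewrite c0 addr0.
Qed.

End EvenInnerProduct.

Section MixedRecurrence.
Variable R : realType.
Variables (ip1 ip2 : {poly R} -> {poly R} -> R) (A B : nat -> {poly R}).
Hypotheses (E1 : even_inner_product ip1) (E2 : even_inner_product ip2).
Hypotheses (HA : monic_OPS ip1 A) (HB : monic_OPS ip2 B).
Hypothesis ip_mulX_adj : forall f g, ip2 ('X * f) g = ip1 f ('X * g).

Lemma ip_mulX_OPS_lt n j : (j.+1 < n)%N -> ip2 ('X * A n) (B j) = 0.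
Proof. by move=> jn; rewrite ip_mulX_adj (OPS_orthl HA) // (size_mulX_OPS HB). Qed.

Lemma ip_mulX_OPS_eq0 n : ip2 ('X * A n) (B n) = 0.
Proof.
rewrite ip_mulX_adj; apply: (ip_parity_eq0 E1 (m := n)); first exact: (OPS_compNX E1 HA).
by rewrite comp_polyM comp_polyX (OPS_compNX E2 HB) mulNr -scalerAr.
Qed.

Lemma ip_mulX_OPS_pred n : ip2 ('X * A n.+1) (B n) = ip1 (A n.+1) (A n.+1).
Proof.
have : ip1 ('X * B n - A n.+1) (A n.+1) = 0.
  apply: (OPS_orthr E1 HA); apply: size_monicB (size_mulX_OPS HB n) (size_OPS HA n.+1) _ _.
    exact: (monic_mulX_OPS HB).
  exact: (monic_OPS_monic HA).
by rewrite ipBl // ipC // ip_mulX_adj => /eqP; rewrite subr_eq0 => /eqP.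
Qed.

Lemma OPS_mulX_recurrence n :
  'X * A n.+1 = B n.+2 + (ip1 (A n.+1) (A n.+1) / ip2 (B n) (B n)) *: B n.
Proof.
set a := _ / _.
suff r0 : 'X * A n.+1 - B n.+2 - a *: B n = 0.
  by apply/eqP; rewrite -subr_eq0 opprD addrA r0.
apply: (OPS_ortho_eq0 E2 HB (n := n.+2)) => [|j].
  apply: leq_trans (size_polyD _ _) _; rewrite size_polyN geq_max.
  rewrite (size_monicB (size_mulX_OPS HA n.+1) (size_OPS HB n.+2)) ?(monic_mulX_OPS HA) //=.
    by rewrite (leq_trans (size_scale_leq _ _)) // (size_OPS HB).
  exact: (monic_OPS_monic HB).
rewrite !ipBl // ipZl // ltnS leq_eqVlt => /orP[/eqP ->|].
  by rewrite ip_mulX_OPS_eq0 (OPS_orthl HB) ?(OPS_orthr E2 HB) ?(size_OPS HB) // mulr0 !subr0.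
rewrite ltnS leq_eqVlt => /orP[/eqP ->|jn].
  rewrite ip_mulX_OPS_pred (OPS_orthl HB) ?(size_OPS HB) // divfK ?subr0 ?subrr //.
  exact: (OPS_norm_neq0 E2 HB).
rewrite ip_mulX_OPS_lt // !(OPS_orthl HB) ?(size_OPS HB) //; first by rewrite mulr0 !subr0.
lia.
Qed.

End MixedRecurrence.

Section FreudSobolev.
Variable R : realType.
Implicit Types f g : {poly R}.

Lemma ipF_freud_int f g : ipF f g = freud_int (f * g).
Proof. by apply: eq_Rintegral => x _; rewrite hornerM. Qed.

Lemma even_inner_product_ipF : even_inner_product (@ipF R).
Proof.
split=> [f g|f g h|c f h|f|f g]; rewrite !ipF_freud_int.
- by rewrite mulrC.
- by rewrite mulrDl freud_intD.
- by rewrite -scalerAl freud_intZ.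
- exact: freud_int_sqr_eq0.
- by rewrite -comp_polyM freud_int_compNX.
Qed.

Lemma ipS0E (l1 : R) f g : ipS l1 0 f g = ipF f g + l1 * f.[0] * g.[0].
Proof. by rewrite /ipS !mul0r addr0. Qed.

Lemma even_inner_product_ipS (l1 : R) : 0 <= l1 -> even_inner_product (ipS l1 0).
Proof.
have EF := even_inner_product_ipF.
move=> l1_ge0; split=> [f g|f g h|c f h|f|f g]; rewrite !ipS0E.
- by rewrite (ipC EF) mulrAC.
- by rewrite (ipDl EF) hornerD; ring.
- by rewrite (ipZl EF) hornerZ; ring.
- move=> ipS_ff0; apply: (ip_anisotropic EF).
  have ipF_ge0 : 0 <= ipF f f by rewrite ipF_freud_int freud_int_sqr_ge0.
  have : 0 <= l1 * f.[0] * f.[0] by rewrite -mulrA mulr_ge0 // -expr2 sqr_ge0.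
  lra.
- by rewrite (ip_compNX EF) !horner_comp hornerN hornerX oppr0.
Qed.

(* The point mass at [0] does not see [x f]. *)
Lemma ipS_mulXl (l1 : R) f g : ipS l1 0 ('X * f) g = ipF f ('X * g).
Proof.
rewrite ipS0E hornerM hornerX mul0r mulr0 mul0r addr0 !ipF_freud_int.
by rewrite mulrCA mulrA.
Qed.

Lemma ipF_mulXl (l1 : R) f g : ipF ('X * f) g = ipS l1 0 f ('X * g).
Proof.
rewrite (ipC even_inner_product_ipF) -(ipS_mulXl l1) !ipS0E.
by rewrite (ipC even_inner_product_ipF) mulrAC.
Qed.

End FreudSobolev.

Theorem mainTheorem2 (R : realType) (l1 l2 : R) (P Q : nat -> {poly R}) :
  0 <= l1 -> l2 = 0 ->
  monic_OPS (@ipF R) P ->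
  monic_OPS (ipS l1 l2) Q ->
  let k := fun n => ipF (P n) (P n) in
  let kh := fun n => ipS l1 l2 (Q n) (Q n) in
  Q 0%N = 1 /\ Q 1%N = 'X /\
  (forall n : nat, (1 <= n)%N ->
     'X * P n = Q n.+1 + (k n / kh n.-1) *: Q n.-1 /\
     'X * Q n = P n.+1 + (kh n / k n.-1) *: P n.-1).
Proof.
move=> l1_ge0 -> HP HQ k kh.
have EF := @even_inner_product_ipF R; have ES := even_inner_product_ipS l1_ge0.
split; first exact: OPS0 HQ.
split; first exact: (OPS1 ES).
case=> // n _; rewrite /k /kh /=; split.
- exact: OPS_mulX_recurrence EF ES HP HQ (ipS_mulXl l1) n.
- exact: OPS_mulX_recurrence ES EF HQ HP (ipF_mulXl l1) n.
Qed.
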